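(* $D(\ell_1)>1$; that is, there exist a locally finite metric space $A$ and a constant $C\ge1$ such that every finite subset of $A$ admits a bilipschitz embedding into $\ell_1$ with distortion $\le C$, but $A$ admits no bilipschitz embedding into $\ell_1$ with distortion $\le C$.
   Context: A metric space is locally finite if every ball of finite radius in it has finite cardinality. For metric spaces $(A,d_A),(Y,d_Y)$ and $C\ge1$, a map $f:A\to Y$ is a $C$-bilipschitz embedding if there is $r>0$ with $r\,d_A(u,v)\le d_Y(f(u),f(v))\le rC\,d_A(u,v)$ for all $u,v\in A$; the distortion of $f$ is the least such $C$. For a Banach space $X$ and $\alpha\ge1$, write $D(X)\le\alpha$ if for every locally finite metric space $A$ and every $C\ge1$ such that all finite subsets of $A$ admit bilipschitz embeddings into $X$ with distortion $\le C$, the space $A$ itself admits a bilipschitz embedding into $X$ with distortion $\le\alpha C$. ''$D(X)>1$'' means that $D(X)\le1$ fails. *)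

From Stdlib Require Import Reals List.
Open Scope R_scope.

Record MetricSpace : Type := {
  pt :> Type;
  dist : pt -> pt -> R;
  dist_nonneg : forall x y, 0 <= dist x y;
  dist_eq0 : forall x y, dist x y = 0 <-> x = y;
  dist_sym : forall x y, dist x y = dist y x;
  dist_tri : forall x y z, dist x z <= dist x y + dist y z
}.

Definition locally_finite (A : MetricSpace) : Prop :=
  forall (x : A) (r : R), exists l : list A,
    forall y : A, dist A x y <= r -> In y l.

Definition in_l1 (x : nat -> R) : Prop :=
  exists s, infinite_sum (fun n => Rabs (x n)) s.

Definition l1_dist (x y : nat -> R) (s : R) : Prop :=
  infinite_sum (fun n => Rabs (x n - y n)) s.

Definition bilip_into_l1_on (A : MetricSpace) (S : A -> Prop)
    (f : A -> nat -> R) (C : R) : Prop :=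
  (forall u, S u -> in_l1 (f u)) /\
  exists r, 0 < r /\
    forall u v, S u -> S v ->
      exists s, l1_dist (f u) (f v) s /\
        r * dist A u v <= s /\ s <= r * C * dist A u v.

Definition embeds_l1_on (A : MetricSpace) (S : A -> Prop) (C : R) : Prop :=
  exists f : A -> nat -> R, bilip_into_l1_on A S f C.

From Stdlib Require Import Reals List Lra Lia Bool ProofIrrelevance.
Open Scope R_scope.
Import ListNotations.

(* A is the disjoint union of finite trees T_k (k : nat).  The points of T_k are the empty set and
   the cylinders of Cantor space given by binary strings of length <= k, with the measure of the
   symmetric difference as distance; distinct levels j <> k are at distance (j+1) + (k+1), which
   makes balls finite.  All these distances are l_1-distances of indicator coordinates (one per
   level, one per atom of a fine enough partition of Cantor space), so every finite subset embeds
   isometrically into l_1.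
   Conversely, let f embed A into l_1 scaling all distances by r.  If four points form a metric
   rectangle (each diagonal is a geodesic through both remaining vertices), then in every coordinate
   of f they coincide in pairs.  The rectangles formed by {empty, s} at two consecutive levels
   and by empty, s0, s1, s inside one level show that the n-th coordinate gap between the empty
   set and the root cylinder at level 0 reappears between the empty set and some string of
   length k at level k; it is therefore at most r 2^-k, hence 0, contradicting their distance 1. *)

Fixpoint prefixb (s t : list bool) : bool :=
  match s, t with
  | [], _ => true
  | _ :: _, [] => false
  | b :: s', c :: t' => Bool.eqb b c && prefixb s' t'
  end.

Lemma prefixb_refl s : prefixb s s = true.
Proof. induction s; simpl; auto. rewrite eqb_reflx; auto. Qed.

Lemma prefixb_trans s t u :
  prefixb s t = true -> prefixb t u = true -> prefixb s u = true.
Proof.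
  revert t u; induction s as [|a s IH]; intros [|b t] [|c u]; simpl; auto; try discriminate.
  intros [E1 H1]%andb_prop [E2 H2]%andb_prop.
  apply eqb_prop in E1, E2; subst. rewrite eqb_reflx. eauto.
Qed.

Lemma prefixb_length s t : prefixb s t = true -> (length s <= length t)%nat.
Proof.
  revert t; induction s as [|a s IH]; intros [|b t]; simpl; try lia; try discriminate.
  intros [_ H]%andb_prop. apply IH in H; lia.
Qed.

Lemma prefixb_length_eq s t : prefixb s t = true -> length t = length s -> s = t.
Proof.
  revert t; induction s as [|a s IH]; intros [|b t]; simpl; auto; try discriminate.
  intros [E H]%andb_prop L. apply eqb_prop in E; subst. f_equal; auto.
Qed.

Lemma prefixb_comparable s t u : prefixb s u = true -> prefixb t u = true ->
  prefixb s t = true \/ prefixb t s = true.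
Proof.
  revert t u; induction s as [|a s IH]; intros [|b t] [|c u]; simpl; auto; try discriminate.
  intros [E1 H1]%andb_prop [E2 H2]%andb_prop.
  apply eqb_prop in E1, E2; subst. rewrite eqb_reflx. eauto.
Qed.

Lemma prefixb_app s u : prefixb s (s ++ u) = true.
Proof. induction s; simpl; auto. rewrite eqb_reflx; auto. Qed.

Lemma prefixb_snoc s b c : prefixb (s ++ [b]) (s ++ [c]) = Bool.eqb b c.
Proof. induction s; simpl; [apply andb_true_r | rewrite eqb_reflx; auto]. Qed.

Lemma prefixb_snoc_l s b : prefixb (s ++ [b]) s = false.
Proof.
  destruct (prefixb (s ++ [b]) s) eqn:E; auto.
  apply prefixb_length in E. rewrite length_app in E; simpl in E; lia.
Qed.

(* [Some s] stands for the cylinder of all infinite binary sequences extending [s],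
   [None] for the empty set; [cyl_mem x a] says that the cylinder of [a] lies in [x]. *)
Definition cyl := option (list bool).

Definition cyl_mem (x : cyl) (a : list bool) : bool :=
  match x with None => false | Some s => prefixb s a end.

Definition cyl_meet (x y : cyl) : cyl :=
  match x, y with
  | Some s, Some t => if prefixb s t then Some t else if prefixb t s then Some s else None
  | _, _ => None
  end.

Definition cyl_mass (x : cyl) : R :=
  match x with None => 0 | Some s => (/2) ^ length s end.

Definition cyl_dist (x y : cyl) : R :=
  cyl_mass x + cyl_mass y - 2 * cyl_mass (cyl_meet x y).

Lemma cyl_mem_meet x y a : cyl_mem (cyl_meet x y) a = cyl_mem x a && cyl_mem y a.
Proof.
  destruct x as [s|], y as [t|]; simpl; auto; [|destruct (prefixb s a); auto].
  destruct (prefixb s t) eqn:Est; simpl.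
  - destruct (prefixb t a) eqn:Eta; simpl.
    + rewrite (prefixb_trans _ _ _ Est Eta); auto.
    + destruct (prefixb s a); auto.
  - destruct (prefixb t s) eqn:Ets; simpl.
    + destruct (prefixb s a) eqn:Esa; simpl; auto.
      rewrite (prefixb_trans _ _ _ Ets Esa); auto.
    + destruct (prefixb s a) eqn:Esa, (prefixb t a) eqn:Eta; auto.
      destruct (prefixb_comparable _ _ _ Esa Eta); congruence.
Qed.

Lemma cyl_meet_comm x y : cyl_meet x y = cyl_meet y x.
Proof.
  destruct x as [s|], y as [t|]; simpl; auto.
  destruct (prefixb s t) eqn:Est, (prefixb t s) eqn:Ets; auto.
  assert (s = t) as ->
    by (apply prefixb_length_eq; auto; apply Nat.le_antisymm; apply prefixb_length; auto).
  auto.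
Qed.

Lemma cyl_meet_some x y s : cyl_meet x y = Some s -> x = Some s \/ y = Some s.
Proof.
  destruct x as [a|], y as [b|]; simpl; try discriminate.
  destruct (prefixb a b); [auto|]. destruct (prefixb b a); [auto|discriminate].
Qed.

Lemma pow_half_pos n : 0 < (/2) ^ n.
Proof. apply pow_lt; lra. Qed.

Lemma pow_half_le m n : (m <= n)%nat -> (/2) ^ n <= (/2) ^ m.
Proof. induction 1; [lra|]. simpl. pose proof (pow_half_pos m0). lra. Qed.

Lemma pow_half_inj m n : (/2) ^ m = (/2) ^ n -> m = n.
Proof.
  intros E. destruct (Nat.lt_trichotomy m n) as [H|[H|H]]; auto;
    [pose proof (pow_half_le _ _ H) as L; pose proof (pow_half_pos m)
    |pose proof (pow_half_le _ _ H) as L; pose proof (pow_half_pos n)];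
    simpl in L; lra.
Qed.

Lemma cyl_mass_ge0 x : 0 <= cyl_mass x.
Proof. destruct x; simpl; [apply Rlt_le, pow_half_pos | lra]. Qed.

Lemma cyl_mass_meet_l x y : cyl_mass (cyl_meet x y) <= cyl_mass x.
Proof.
  destruct x as [s|], y as [t|]; simpl; try lra; try apply cyl_mass_ge0.
  - destruct (prefixb s t) eqn:Est; simpl; [apply pow_half_le, prefixb_length; auto|].
    destruct (prefixb t s); simpl; [lra | apply Rlt_le, pow_half_pos].
  - apply Rlt_le, pow_half_pos.
Qed.

Lemma cyl_mass_meet_r x y : cyl_mass (cyl_meet x y) <= cyl_mass y.
Proof. rewrite cyl_meet_comm; apply cyl_mass_meet_l. Qed.

Lemma cyl_dist_ge0 x y : 0 <= cyl_dist x y.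
Proof.
  unfold cyl_dist; pose proof (cyl_mass_meet_l x y); pose proof (cyl_mass_meet_r x y); lra.
Qed.

Lemma cyl_dist_sym x y : cyl_dist x y = cyl_dist y x.
Proof. unfold cyl_dist; rewrite cyl_meet_comm; lra. Qed.

Lemma cyl_dist_eq0 x y : cyl_dist x y = 0 -> x = y.
Proof.
  unfold cyl_dist. destruct x as [s|], y as [t|]; simpl; intros H; auto.
  - pose proof (pow_half_pos (length s)); pose proof (pow_half_pos (length t)).
    destruct (prefixb s t) eqn:Est; [|destruct (prefixb t s) eqn:Ets]; simpl in H.
    + f_equal; apply prefixb_length_eq; auto. apply pow_half_inj; lra.
    + f_equal; symmetry; apply prefixb_length_eq; auto. apply pow_half_inj; lra.
    + lra.
  - pose proof (pow_half_pos (length s)); lra.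
  - pose proof (pow_half_pos (length t)); lra.
Qed.

Lemma cyl_dist_refl x : cyl_dist x x = 0.
Proof. unfold cyl_dist; destruct x as [s|]; simpl; [rewrite prefixb_refl|]; simpl; lra. Qed.

Definition level_dist (a b : nat) : R := if Nat.eqb a b then 0 else INR (S a) + INR (S b).

Lemma level_dist_ge0 a b : 0 <= level_dist a b.
Proof.
  unfold level_dist; destruct (Nat.eqb a b); [lra|].
  pose proof (pos_INR (S a)); pose proof (pos_INR (S b)); lra.
Qed.

Lemma level_dist_refl a : level_dist a a = 0.
Proof. unfold level_dist; rewrite Nat.eqb_refl; auto. Qed.

Lemma level_dist_sym a b : level_dist a b = level_dist b a.
Proof. unfold level_dist. rewrite Nat.eqb_sym. destruct (Nat.eqb b a); lra. Qed.

Lemma level_dist_eq0 a b : level_dist a b = 0 -> a = b.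
Proof.
  unfold level_dist. destruct (Nat.eqb_spec a b); auto.
  pose proof (lt_0_INR (S a) ltac:(lia)); pose proof (lt_0_INR (S b) ltac:(lia)); lra.
Qed.

Definition cyl_fits (k : nat) (x : cyl) : Prop :=
  match x with None => True | Some s => (length s <= k)%nat end.

Definition Pt := {p : nat * cyl | cyl_fits (fst p) (snd p)}.
Definition level (p : Pt) : nat := fst (proj1_sig p).
Definition cut (p : Pt) : cyl := snd (proj1_sig p).

Definition pdist (p q : Pt) : R := level_dist (level p) (level q) + cyl_dist (cut p) (cut q).

Lemma cut_length p s : cut p = Some s -> (length s <= level p)%nat.
Proof. destruct p as [[k x] H]. unfold cut, level; simpl. intros ->. exact H. Qed.

Definition cyl_trunc (k : nat) (x : cyl) : cyl := option_map (firstn k) x.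

Lemma cyl_trunc_fits k x : cyl_fits k (cyl_trunc k x).
Proof. destruct x; simpl; [apply firstn_le_length | exact I]. Qed.

Definition point (k : nat) (x : cyl) : Pt := exist _ (k, cyl_trunc k x) (cyl_trunc_fits k x).

Lemma cyl_trunc_id k s : (length s <= k)%nat -> cyl_trunc k (Some s) = Some s.
Proof. intros H; simpl; rewrite firstn_all2; auto. Qed.

Lemma point_level_cut p : point (level p) (cut p) = p.
Proof.
  destruct p as [[k x] H]. unfold point, level, cut; simpl.
  assert (E : cyl_trunc k x = x) by (destruct x; [apply cyl_trunc_id|]; auto).
  generalize (cyl_trunc_fits k x). rewrite E. intros; f_equal; apply proof_irrelevance.
Qed.

Definition lsum (l : list R) : R := fold_right Rplus 0 l.
Definition ind (b : bool) : R := if b then 1 else 0.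

Lemma lsum_app l l' : lsum (l ++ l') = lsum l + lsum l'.
Proof. induction l; simpl; [lra|]. rewrite IHl; lra. Qed.

Lemma lsum_map_ext {A} (f g : A -> R) L :
  (forall a, f a = g a) -> lsum (map f L) = lsum (map g L).
Proof. intros H; rewrite (map_ext f g); auto. Qed.

Lemma lsum_map_zero {A} (f : A -> R) L : (forall a, In a L -> f a = 0) -> lsum (map f L) = 0.
Proof.
  induction L as [|a L IH]; simpl; intros H; [lra|].
  rewrite IH, H; auto; lra.
Qed.

Lemma lsum_map_scal {A} (f : A -> R) c L :
  lsum (map (fun a => c * f a) L) = c * lsum (map f L).
Proof. induction L; simpl; [lra|]. rewrite IHL; lra. Qed.

Lemma lsum_abs_triangle {A} (L : list (A -> R)) u v w :
  lsum (map (fun c => Rabs (c u - c w)) L) <=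
  lsum (map (fun c => Rabs (c u - c v)) L) + lsum (map (fun c => Rabs (c v - c w)) L).
Proof.
  induction L as [|c L IH]; simpl; [lra|].
  pose proof (Rabs_triang (c u - c v) (c v - c w)).
  replace (c u - c v + (c v - c w)) with (c u - c w) in * by ring. lra.
Qed.

Lemma lsum_symdiff {A} (w : A -> R) (X Y : A -> bool) L : (forall a, 0 <= w a) ->
  lsum (map (fun a => Rabs (w a * ind (X a) - w a * ind (Y a))) L) =
  lsum (map (fun a => w a * ind (X a)) L) + lsum (map (fun a => w a * ind (Y a)) L)
  - 2 * lsum (map (fun a => w a * ind (X a && Y a)) L).
Proof.
  intros Hw. induction L as [|a L IH]; simpl; [lra|]. rewrite IH.
  specialize (Hw a). destruct (X a), (Y a); simpl; unfold ind, Rabs;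
    destruct Rcase_abs; lra.
Qed.

Lemma lsum_point_mass (w : nat -> R) a L : NoDup L -> In a L ->
  lsum (map (fun k => w k * ind (Nat.eqb a k)) L) = w a.
Proof.
  induction 1 as [|c L Hc HL IH]; [contradiction|]. simpl. intros Ha.
  destruct (Nat.eqb_spec a c) as [->|Hac].
  - rewrite lsum_map_zero; [unfold ind; lra|].
    intros k Hk. destruct (Nat.eqb_spec c k); [subst; contradiction | unfold ind; lra].
  - destruct Ha as [->|Ha]; [congruence|]. rewrite (IH Ha). unfold ind; lra.
Qed.

Fixpoint strings (n : nat) : list (list bool) :=
  match n with
  | O => [[]]
  | S n => map (cons true) (strings n) ++ map (cons false) (strings n)
  end.

Lemma in_strings s : In s (strings (length s)).
Proof.
  induction s as [|b s IH]; simpl; auto.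
  apply in_or_app. destruct b; [left|right]; apply in_map; auto.
Qed.

(* The atoms of level [K] are the cylinders of the strings of length [K]; they each have mass 2^-K. *)
Lemma atoms_below K s : (length s <= K)%nat ->
  lsum (map (fun a => ind (prefixb s a)) (strings K)) * (/2) ^ K = (/2) ^ length s.
Proof.
  revert s; induction K as [|K IH]; intros s Hs.
  - destruct s; simpl in *; [lra|lia].
  - simpl strings. rewrite map_app, lsum_app, !map_map.
    destruct s as [|b s].
    + specialize (IH [] ltac:(simpl; lia)). simpl in *. lra.
    + simpl in Hs. specialize (IH s ltac:(lia)).
      assert (Other : forall c, c <> b ->
        lsum (map (fun a => ind (prefixb (b :: s) (c :: a))) (strings K)) = 0).
      { intros c Hc. apply lsum_map_zero. intros a _. simpl. destruct b, c; try congruence; auto. }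
      assert (Same : lsum (map (fun a => ind (prefixb (b :: s) (b :: a))) (strings K)) =
                     lsum (map (fun a => ind (prefixb s a)) (strings K))).
      { apply lsum_map_ext. intros a. simpl. rewrite eqb_reflx. auto. }
      destruct b; rewrite Same, Other by congruence; simpl; lra.
Qed.

Lemma cyl_mass_atoms K x : (forall s, x = Some s -> (length s <= K)%nat) ->
  lsum (map (fun a => (/2) ^ K * ind (cyl_mem x a)) (strings K)) = cyl_mass x.
Proof.
  intros H. destruct x as [s|].
  - rewrite lsum_map_scal. simpl. rewrite <- (atoms_below K s) by (apply H; auto). lra.
  - rewrite lsum_map_zero; auto. intros; simpl; unfold ind; lra.
Qed.

Definition level_coord (k : nat) (p : Pt) : R := INR (S k) * ind (Nat.eqb (level p) k).
Definition atom_coord (K : nat) (a : list bool) (p : Pt) : R :=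
  (/2) ^ K * ind (cyl_mem (cut p) a).
Definition coords (K : nat) : list (Pt -> R) :=
  map level_coord (seq 0 (S K)) ++ map (atom_coord K) (strings K).

Lemma level_coords_l1 K u v : (level u <= K)%nat -> (level v <= K)%nat ->
  lsum (map (fun c => Rabs (c u - c v)) (map level_coord (seq 0 (S K)))) =
  level_dist (level u) (level v).
Proof.
  intros Hu Hv. rewrite map_map. unfold level_coord.
  rewrite lsum_symdiff by (intros; apply pos_INR).
  assert (Nd : NoDup (seq 0 (S K))) by apply seq_NoDup.
  rewrite !lsum_point_mass by (auto; apply in_seq; lia).
  unfold level_dist. destruct (Nat.eqb_spec (level u) (level v)) as [E|E].
  - rewrite E, (lsum_map_ext _ (fun k => INR (S k) * ind (Nat.eqb (level v) k)))
      by (intros; rewrite andb_diag; auto).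
    rewrite lsum_point_mass by (auto; apply in_seq; lia). lra.
  - rewrite lsum_map_zero; [lra|]. intros k _.
    destruct (Nat.eqb_spec (level u) k), (Nat.eqb_spec (level v) k); subst;
      simpl; unfold ind; try lra; congruence.
Qed.

Lemma atom_coords_l1 K u v : (level u <= K)%nat -> (level v <= K)%nat ->
  lsum (map (fun c => Rabs (c u - c v)) (map (atom_coord K) (strings K))) =
  cyl_dist (cut u) (cut v).
Proof.
  intros Hu Hv. rewrite map_map. unfold atom_coord.
  rewrite lsum_symdiff by (intros; apply pow_le; lra).
  rewrite (lsum_map_ext (fun a => _ * ind (_ && _))
             (fun a => (/2) ^ K * ind (cyl_mem (cyl_meet (cut u) (cut v)) a)))
    by (intros; rewrite cyl_mem_meet; auto).
  assert (Fu : forall s, cut u = Some s -> (length s <= K)%nat)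
    by (intros s Hs; apply cut_length in Hs; lia).
  assert (Fv : forall s, cut v = Some s -> (length s <= K)%nat)
    by (intros s Hs; apply cut_length in Hs; lia).
  rewrite !cyl_mass_atoms; auto.
  intros s Hs. destruct (cyl_meet_some _ _ _ Hs); auto.
Qed.

Lemma coords_l1 K u v : (level u <= K)%nat -> (level v <= K)%nat ->
  lsum (map (fun c => Rabs (c u - c v)) (coords K)) = pdist u v.
Proof.
  intros Hu Hv. unfold coords, pdist.
  rewrite map_app, lsum_app, level_coords_l1, atom_coords_l1; auto.
Qed.

Lemma pdist_ge0 p q : 0 <= pdist p q.
Proof.
  unfold pdist.
  pose proof (level_dist_ge0 (level p) (level q)); pose proof (cyl_dist_ge0 (cut p) (cut q)); lra.
Qed.

Lemma pdist_eq0 p q : pdist p q = 0 <-> p = q.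
Proof.
  split.
  - unfold pdist. intros H.
    pose proof (level_dist_ge0 (level p) (level q)); pose proof (cyl_dist_ge0 (cut p) (cut q)).
    rewrite <- (point_level_cut p), <- (point_level_cut q).
    rewrite (level_dist_eq0 (level p) (level q)), (cyl_dist_eq0 (cut p) (cut q)) by lra.
    reflexivity.
  - intros ->. unfold pdist. rewrite level_dist_refl, cyl_dist_refl. lra.
Qed.

Lemma pdist_sym p q : pdist p q = pdist q p.
Proof. unfold pdist. rewrite level_dist_sym, cyl_dist_sym. auto. Qed.

Lemma pdist_triangle p q u : pdist p u <= pdist p q + pdist q u.
Proof.
  set (K := Nat.max (level p) (Nat.max (level q) (level u))).
  rewrite <- !(coords_l1 K) by (unfold K; lia). apply lsum_abs_triangle.
Qed.

Definition Space : MetricSpace :=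
  Build_MetricSpace Pt pdist pdist_ge0 pdist_eq0 pdist_sym pdist_triangle.

Definition points_upto (M : nat) : list Pt :=
  flat_map (fun k => point k None ::
                     map (fun s => point k (Some s)) (flat_map strings (seq 0 (S M))))
           (seq 0 (S M)).

Lemma in_points_upto M p : (level p <= M)%nat -> In p (points_upto M).
Proof.
  intros H. rewrite <- (point_level_cut p). apply in_flat_map.
  exists (level p). split; [apply in_seq; lia|].
  destruct (cut p) as [s|] eqn:Es; [right|left; auto].
  apply (in_map (fun s => point _ (Some s))). apply in_flat_map. exists (length s).
  apply cut_length in Es. split; [apply in_seq; lia | apply in_strings].
Qed.

Lemma Space_locally_finite : locally_finite Space.
Proof.
  intros x r. destruct (INR_archimed 1 r ltac:(lra)) as [N HN].
  exists (points_upto (level x + N)). intros y Hy. apply in_points_upto.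
  simpl in Hy. unfold pdist, level_dist in Hy.
  destruct (Nat.eqb_spec (level x) (level y)) as [E|E]; [lia|].
  pose proof (cyl_dist_ge0 (cut x) (cut y)). pose proof (pos_INR (S (level x))).
  destruct (Nat.le_gt_cases (level y) (level x + N)); auto.
  assert (INR N <= INR (S (level y))) by (apply le_INR; lia). lra.
Qed.

Lemma infinite_sum_ext a b l :
  (forall n, a n = b n) -> infinite_sum a l -> infinite_sum b l.
Proof.
  intros E H eps He. destruct (H eps He) as [N HN]. exists N. intros n Hn.
  rewrite <- (sum_eq a b n) by auto. auto.
Qed.

Lemma infinite_sum_nth (l : list R) : infinite_sum (fun n => nth n l 0) (lsum l).
Proof.
  assert (Partial : forall N, (length l <= S N)%nat ->
            sum_f_R0 (fun n => nth n l 0) N = lsum l).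
  { induction l as [|x l IH]; intros N HN.
    - simpl. induction N; simpl in *; [lra|]. rewrite IHN by lia. lra.
    - destruct N as [|N].
      + destruct l; simpl in *; [lra|lia].
      + rewrite decomp_sum by lia. simpl. rewrite IH by (simpl in HN; lia). auto. }
  intros eps He. exists (length l). intros n Hn. rewrite Partial by lia.
  unfold Rdist. rewrite Rminus_diag, Rabs_R0. auto.
Qed.

Lemma nth_map_default {A} (f : A -> R) (d : A) L n :
  f d = 0 -> nth n (map f L) 0 = f (nth n L d).
Proof. intros H. rewrite <- H. apply map_nth. Qed.

Definition max_level (l : list Pt) : nat := fold_right Nat.max 0%nat (map level l).

Lemma level_le_max_level l u : In u l -> (level u <= max_level l)%nat.
Proof.
  unfold max_level; induction l as [|a l IH]; simpl; [tauto|].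
  intros [->|H]; [lia | apply IH in H; lia].
Qed.

Lemma Space_finite_isometric (l : list Pt) : embeds_l1_on Space (fun x => In x l) 1.
Proof.
  set (K := max_level l).
  exists (fun p n => nth n (coords K) (fun _ => 0) p). split.
  - intros u _. exists (lsum (map (fun c => Rabs (c u)) (coords K))).
    eapply infinite_sum_ext; [|apply infinite_sum_nth].
    intros n; cbv beta. rewrite (nth_map_default _ (fun _ => 0)); auto. apply Rabs_R0.
  - exists 1. split; [lra|]. intros u v Hu Hv.
    exists (pdist u v). split; [|simpl; lra].
    unfold l1_dist. rewrite <- (coords_l1 K) by (apply level_le_max_level; auto).
    eapply infinite_sum_ext; [|apply infinite_sum_nth].
    intros n; cbv beta. rewrite (nth_map_default _ (fun _ => 0)); auto.
    rewrite Rminus_0_r; apply Rabs_R0.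
Qed.

Lemma infinite_sum_plus a b A B : infinite_sum a A -> infinite_sum b B ->
  infinite_sum (fun n => a n + b n) (A + B).
Proof.
  intros Ha Hb eps He. destruct (CV_plus _ _ _ _ Ha Hb eps He) as [N HN].
  exists N. intros n Hn. rewrite plus_sum. apply HN; auto.
Qed.

Lemma infinite_sum_minus a b A B : infinite_sum a A -> infinite_sum b B ->
  infinite_sum (fun n => a n - b n) (A - B).
Proof.
  intros Ha Hb eps He. destruct (CV_minus _ _ _ _ Ha Hb eps He) as [N HN].
  exists N. intros n Hn. rewrite minus_sum. apply HN; auto.
Qed.

Lemma infinite_sum_term_le a A m :
  (forall n, 0 <= a n) -> infinite_sum a A -> a m <= A.
Proof.
  intros Hp HS.
  assert (G : forall n, sum_f_R0 a n <= A).
  { apply growing_ineq; [|exact HS]. intros n. simpl. pose proof (Hp (S n)); lra. }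
  destruct m as [|m]; [apply (G O)|].
  pose proof (G (S m)) as H. simpl in H. pose proof (cond_pos_sum a m Hp). lra.
Qed.

Lemma le_pow_half_eq0 a c : 0 <= a -> 0 < c -> (forall k, a <= c * (/2) ^ k) -> a = 0.
Proof.
  intros Ha Hc H. destruct (Req_dec a 0) as [E|E]; auto. exfalso.
  destruct (pow_lt_1_zero (/2) ltac:(rewrite Rabs_right; lra) (a / c))
    as [N HN]; [apply Rdiv_lt_0_compat; lra|].
  specialize (HN N (Nat.le_refl N)).
  rewrite Rabs_right in HN by (apply Rle_ge, pow_le; lra).
  apply (Rmult_lt_compat_l c) in HN; auto.
  replace (c * (a / c)) with a in HN by (field; lra). specialize (H N). lra.
Qed.

Lemma Rabs_rectangle a b c e :
  Rabs (a - e) = Rabs (a - b) + Rabs (b - e) ->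
  Rabs (a - e) = Rabs (a - c) + Rabs (c - e) ->
  Rabs (b - c) = Rabs (b - a) + Rabs (a - c) ->
  Rabs (b - c) = Rabs (b - e) + Rabs (e - c) ->
  (a = b /\ c = e) \/ (a = c /\ b = e).
Proof.
  unfold Rabs.
  repeat match goal with |- context [Rcase_abs ?x] => destruct (Rcase_abs x) end;
  intros; first [left; split; lra | right; split; lra | lra].
Qed.

Lemma pdist_point k j x y :
  pdist (point k x) (point j y) = level_dist k j + cyl_dist (cyl_trunc k x) (cyl_trunc j y).
Proof. reflexivity. Qed.

Lemma cyl_dist_empty_l x : cyl_dist None x = cyl_mass x.
Proof. unfold cyl_dist; simpl; lra. Qed.

Lemma cyl_dist_empty_r x : cyl_dist x None = cyl_mass x.
Proof. rewrite cyl_dist_sym; apply cyl_dist_empty_l. Qed.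

Lemma cyl_mass_snoc s b : cyl_mass (Some (s ++ [b])) = cyl_mass (Some s) / 2.
Proof. simpl. rewrite length_app, pow_add. simpl. lra. Qed.

Lemma cyl_dist_snoc_l s b : cyl_dist (Some (s ++ [b])) (Some s) = cyl_mass (Some s) / 2.
Proof.
  unfold cyl_dist, cyl_meet. rewrite prefixb_snoc_l, prefixb_app, cyl_mass_snoc. lra.
Qed.

Lemma cyl_dist_snoc_r s b : cyl_dist (Some s) (Some (s ++ [b])) = cyl_mass (Some s) / 2.
Proof. rewrite cyl_dist_sym; apply cyl_dist_snoc_l. Qed.

Lemma cyl_dist_siblings s b c : b <> c ->
  cyl_dist (Some (s ++ [b])) (Some (s ++ [c])) = cyl_mass (Some s).
Proof.
  intros H. unfold cyl_dist, cyl_meet. rewrite !prefixb_snoc.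
  replace (Bool.eqb b c) with false by (destruct b, c; simpl; congruence).
  replace (Bool.eqb c b) with false by (destruct b, c; simpl; congruence).
  rewrite !cyl_mass_snoc. simpl. lra.
Qed.

Ltac pdist_simpl :=
  rewrite ?pdist_point, ?cyl_trunc_id by (rewrite ?length_app; simpl; lia); simpl cyl_trunc;
  rewrite ?level_dist_refl, ?cyl_dist_refl, ?cyl_dist_empty_l, ?cyl_dist_empty_r,
    ?cyl_dist_snoc_l, ?cyl_dist_snoc_r, ?cyl_dist_siblings by congruence;
  rewrite ?cyl_mass_snoc.

Section ScaledIsometry.

Variable f : Pt -> nat -> R.
Variable r : R.
Hypothesis r_pos : 0 < r.
Hypothesis f_l1 : forall u v, l1_dist (f u) (f v) (r * pdist u v).

Lemma coord_between x y z : pdist x z = pdist x y + pdist y z ->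
  forall n, Rabs (f x n - f z n) = Rabs (f x n - f y n) + Rabs (f y n - f z n).
Proof.
  intros E n.
  assert (T : forall m, Rabs (f x m - f z m) <= Rabs (f x m - f y m) + Rabs (f y m - f z m)).
  { intros m. replace (f x m - f z m) with ((f x m - f y m) + (f y m - f z m)) by ring.
    apply Rabs_triang. }
  pose proof (infinite_sum_minus _ _ _ _
                (infinite_sum_plus _ _ _ _ (f_l1 x y) (f_l1 y z)) (f_l1 x z)) as Slack.
  replace (r * pdist x y + r * pdist y z - r * pdist x z) with 0 in Slack by (rewrite E; ring).
  apply (infinite_sum_term_le _ _ n) in Slack; [|intros m; pose proof (T m); lra].
  pose proof (T n); lra.
Qed.

Lemma coord_rectangle x y x' y' :
  pdist x y' = pdist x y + pdist y y' -> pdist x y' = pdist x x' + pdist x' y' ->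
  pdist y x' = pdist y x + pdist x x' -> pdist y x' = pdist y y' + pdist y' x' ->
  forall n, (f x n = f y n /\ f x' n = f y' n) \/ (f x n = f x' n /\ f y n = f y' n).
Proof.
  intros H1 H2 H3 H4 n. apply Rabs_rectangle; apply coord_between; auto.
Qed.

Definition spread (n k : nat) (s : list bool) : R :=
  Rabs (f (point k None) n - f (point k (Some s)) n).

Lemma spread_next_level n k s : (length s <= k)%nat -> spread n k s = spread n (S k) s.
Proof.
  intros Hs. unfold spread.
  pose proof (level_dist_sym (S k) k).
  destruct (coord_rectangle (point k None) (point k (Some s))
                            (point (S k) None) (point (S k) (Some s))) with (n := n)
    as [[E1 E2]|[E1 E2]]; try (pdist_simpl; lra).
  - rewrite E1, E2, !Rminus_diag; auto.
  - rewrite E1, E2; auto.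
Qed.

Lemma spread_child n k s : (length s < k)%nat ->
  spread n k s = spread n k (s ++ [true]) \/ spread n k s = spread n k (s ++ [false]).
Proof.
  intros Hs. unfold spread.
  destruct (coord_rectangle (point k None) (point k (Some (s ++ [false])))
                            (point k (Some (s ++ [true]))) (point k (Some s))) with (n := n)
    as [[E1 E2]|[E1 E2]]; try (pdist_simpl; lra).
  - left. rewrite <- E2. auto.
  - right. rewrite E2. auto.
Qed.

Lemma spread_chain n k : exists s, length s = k /\ spread n 0 [] = spread n k s.
Proof.
  induction k as [|k [s [Hs E]]]; [exists []; auto|].
  rewrite (spread_next_level n k s) in E by lia.
  destruct (spread_child n (S k) s) as [E'|E']; [lia| |];
    [exists (s ++ [true]) | exists (s ++ [false])];
    rewrite length_app; simpl; split; try lia; congruence.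
Qed.

Lemma spread_le n k : spread n 0 [] <= r * (/2) ^ k.
Proof.
  destruct (spread_chain n k) as [s [Hs E]]. rewrite E. unfold spread.
  replace ((/2) ^ k) with (pdist (point k None) (point k (Some s)))
    by (pdist_simpl; simpl; rewrite Hs; lra).
  apply (infinite_sum_term_le (fun m => Rabs (f (point k None) m - f (point k (Some s)) m))).
  - intros; apply Rabs_pos.
  - apply f_l1.
Qed.

Lemma no_scaled_isometry : False.
Proof.
  assert (Zero : l1_dist (f (point 0 None)) (f (point 0 (Some []))) 0).
  { eapply infinite_sum_ext; [|apply (infinite_sum_nth [])]. intros n; cbv beta.
    replace (nth n [] 0) with 0 by (destruct n; reflexivity).
    symmetry. apply le_pow_half_eq0 with (c := r); auto; [apply Rabs_pos | apply spread_le]. }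
  pose proof (uniqueness_sum _ _ _ (f_l1 _ _) Zero) as H.
  revert H. pdist_simpl. simpl. lra.
Qed.

End ScaledIsometry.

Theorem theorem1p10 :
  exists (A : MetricSpace) (C : R),
    locally_finite A /\ 1 <= C /\
    (forall l : list A, embeds_l1_on A (fun x => In x l) C) /\
    ~ embeds_l1_on A (fun _ => True) C.
Proof.
  exists Space, 1. split; [apply Space_locally_finite|]. split; [lra|].
  split; [apply Space_finite_isometric|].
  intros [f [_ [r [Hr Hd]]]].
  apply (no_scaled_isometry f r Hr). intros u v.
  destruct (Hd u v I I) as [s [Hs [H1 H2]]].
  replace (r * pdist u v) with s by (simpl in *; lra). exact Hs.
Qed.
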